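(* Let $\boldsymbol\mu=\{\mu_t\}_{t>0}$ be a measurable factorizing family over $[0,1]\times L$, where $L$ is compact. Then the random-set system $\mathbb E^{\boldsymbol\mu}$ is spatial.
   Context: $L$ is a (compact) second countable Hausdorff space. For $t>0$, $\mathscr C_t$ is the space of closed subsets of $[0,t]\times L$ with the Borel $\sigma$-field $\Sigma_t$ of the Fell topology; $\oplus_{s,t}(Z_1,Z_2)=Z_1\cup\{(s+r,\ell):(r,\ell)\in Z_2\}$; $\sigma_t(Z)=\{(r/t,\ell):(r,\ell)\in Z\}$. A family of probability measures $\{\mu_t\}$ on $\mathscr C_t$ is a measurable factorizing family if: (i) $\mu_{s+t}\sim(\mu_s\otimes\mu_t)\circ\oplus_{s,t}^{-1}$ (mutual absolute continuity); (ii) $\mu_t(\{Z:Z\cap(\{r\}\times L)\neq\varnothing\})=0$ for all $t>0,r\in[0,t]$; (iii) no $\mu_t$ is supported on finitely many atoms; (iv a) there is a countable ring $\mathcal R\subset\Sigma_1$ generating $\Sigma_1$ with $t\mapsto(\sigma_t)_*\mu_t(A)$ Borel for each $A\in\mathcal R$; (iv b) there is a Borel $\Delta:(0,\infty)^2\times\mathscr C_1\to(0,\infty)$ with $\Delta(s,t,\sigma_{s+t}(Z))=\Delta_{s,t}(Z)$ $\mu_{s+t}$-a.e., $\Delta_{s,t}=d((\mu_s\otimes\mu_t)\circ\oplus_{s,t}^{-1})/d\mu_{s+t}$. The random-set system $\mathbb E^{\boldsymbol\mu}$ is the Arveson system with fibers $E_t=L^2(\mathscr C_t,\mu_t)$ and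 multiplication $U_{s,t}(f\otimes g)(Z)=\Delta_{s,t}(Z)^{1/2}f(Z\cap([0,s]\times L))g((Z\cap([s,s+t]\times L))-(s,0))$ (Borel structure generated by the sections $\mathbf 1_A$, $A\in\mathcal R$, after scaling by $\sigma_t$). It is spatial if it admits a unit: a nonzero Borel section $u_t\in E_t$ with $u_{s+t}=U_{s,t}(u_s\otimes u_t)$. *)

From HB Require Import structures.
From mathcomp Require Import all_boot all_order all_algebra.
From mathcomp Require Import all_classical all_reals all_analysis measurable_realfun.
Unset Printing Implicit Defensive.
Import Order.TTheory GRing.Theory Num.Theory.
Import numFieldNormedType.Exports.
Local Open Scope classical_set_scope.
Local Open Scope ring_scope.

Section ClosedSets.
Context (R : realType) (L : topologicalType).

Definition band (t : R) : set (R * L) := [set p | 0 <= p.1 <= t].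

Definition Cl (t : R) := {Z : set (R * L) | closed Z /\ Z `<=` band t}.

Lemma Cl0_proof (t : R) : closed (@set0 (R * L)) /\ set0 `<=` band t.
Proof. by split; [exact: closed0 | move=> ?]. Qed.

HB.instance Definition _ t := gen_eqMixin (Cl t).
HB.instance Definition _ t := gen_choiceMixin (Cl t).
HB.instance Definition _ t := isPointed.Build (Cl t) (exist _ set0 (Cl0_proof t)).

Definition fell_subbase (t : R) : set (set (Cl t)) :=
  [set B | (exists K : set (R * L), [/\ compact K, K `<=` band t &
              B = [set Z : Cl t | proj1_sig Z `&` K = set0]])
        \/ (exists G : set (R * L), open G /\
              B = [set Z : Cl t | proj1_sig Z `&` G !=set0])].

Definition fell_open (t : R) : set (set (Cl t)) :=
  [set U : set (Cl t) | forall Z, U Z -> exists n (f : 'I_n -> set (Cl t)),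
     [/\ forall i, fell_subbase t (f i), forall i, f i Z &
         forall Y, (forall i, f i Y) -> U Y]].

Definition ClM (t : R) := g_sigma_algebraType (fell_open t).

Definition mkCl (t : R) (X : set (R * L)) : ClM t :=
  match pselect (closed X /\ X `<=` band t) with
  | left h => exist _ X h
  | right _ => point
  end.

Definition oplus (s t : R) (Z : ClM s * ClM t) : ClM (s + t) :=
  mkCl (s + t) (proj1_sig Z.1 `|` [set p | proj1_sig Z.2 (p.1 - s, p.2)]).

Definition scale (t : R) (Z : ClM t) : ClM 1 :=
  mkCl 1 [set p | proj1_sig Z (p.1 * t, p.2)].

Definition restrL (s t : R) (Z : ClM (s + t)) : ClM s :=
  mkCl s (proj1_sig Z `&` band s).

Definition restrR (s t : R) (Z : ClM (s + t)) : ClM t :=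
  mkCl t [set p | proj1_sig Z (p.1 + s, p.2) /\ s <= p.1 + s <= s + t].

End ClosedSets.

Local Open Scope ereal_scope.

(** Conditions (i)-(iv) of a measurable factorizing family, relative to a
    chosen countable ring [Rg] (condition (iv a)) and a chosen Borel
    version [Delta] of the Radon-Nikodym derivatives (condition (iv b)). *)
Definition measurable_factorizing_family (R : realType) (L : topologicalType)
  (mu : forall t : R, probability (ClM R L t) R)
  (Rg : set (set (ClM R L 1)))
  (Delta : (R * R) * ClM R L 1 -> R) : Prop :=
  [/\ (forall s t : R, (0 < s)%R -> (0 < t)%R ->
         pushforward (mu s \x mu t) (oplus R L s t) `<< mu (s + t)%R /\
         mu (s + t)%R `<< pushforward (mu s \x mu t) (oplus R L s t)),
      (forall t r : R, (0 < t)%R -> (0 <= r <= t)%R ->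
         mu t [set Z : ClM R L t | exists l : L, proj1_sig Z (r, l)] = 0),
      (forall t : R, (0 < t)%R ->
         ~ exists n (f : 'I_n -> ClM R L t),
             measurable (range f) /\ mu t (range f) = 1),
      [/\ countable Rg, setring Rg, Rg `<=` measurable,
          <<s Rg >> = measurable &
          forall A, Rg A ->
            measurable_fun [set t : R | (0 < t)%R]
              (fun t => pushforward (mu t) (scale R L t) A)] &
      [/\ measurable_fun [set x : (R * R) * ClM R L 1 | (0 < x.1.1)%R /\ (0 < x.1.2)%R] Delta,
          (forall x : (R * R) * ClM R L 1, (0 < x.1.1)%R -> (0 < x.1.2)%R -> (0 < Delta x)%R) &
          forall s t : R, (0 < s)%R -> (0 < t)%R ->
            forall A : set (ClM R L (s + t)), measurable A ->
              pushforward (mu s \x mu t) (oplus R L s t) A =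
              \int[mu (s + t)%R]_(Z in A) (Delta ((s, t), scale R L (s + t) Z))%:E]].

(** A unit of the random-set system E^mu: a section t |-> u_t in
    L^2(C_t, mu_t; C), with u_t = ur t + i ui t. *)
Definition rs_unit (R : realType) (L : topologicalType)
  (mu : forall t : R, probability (ClM R L t) R)
  (Rg : set (set (ClM R L 1)))
  (Delta : (R * R) * ClM R L 1 -> R)
  (ur ui : forall t : R, ClM R L t -> R) : Prop :=
  [/\
      (forall t : R, (0 < t)%R ->
         [/\ measurable_fun setT (ur t), measurable_fun setT (ui t) &
             \int[mu t]_Z ((ur t Z) ^+ 2 + (ui t Z) ^+ 2)%:E < +oo]),
      (exists t : R, (0 < t)%R /\
         ~ {ae mu t, forall Z, ur t Z = 0%R /\ ui t Z = 0%R}),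
      (forall A, Rg A ->
         measurable_fun [set t : R | (0 < t)%R]
           (fun t => \int[mu t]_(Z in scale R L t @^-1` A) (ur t Z)%:E) /\
         measurable_fun [set t : R | (0 < t)%R]
           (fun t => \int[mu t]_(Z in scale R L t @^-1` A) (ui t Z)%:E)) &
      (* multiplicativity: u_{s+t} = U_{s,t}(u_s (x) u_t) in L^2(mu_{s+t}) *)
      (forall s t : R, (0 < s)%R -> (0 < t)%R ->
         {ae mu (s + t)%R, forall Z,
           let D := Num.sqrt (Delta ((s, t), scale R L (s + t) Z)) in
           let a1 := ur s (restrL R L s t Z) in
           let b1 := ui s (restrL R L s t Z) in
           let a2 := ur t (restrR R L s t Z) in
           let b2 := ui t (restrR R L s t Z) in
           ur (s + t)%R Z = (D * (a1 * a2 - b1 * b2))%R /\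
           ui (s + t)%R Z = (D * (a1 * b2 + b1 * a2))%R})].

Definition spatial (R : realType) (L : topologicalType)
  (mu : forall t : R, probability (ClM R L t) R)
  (Rg : set (set (ClM R L 1)))
  (Delta : (R * R) * ClM R L 1 -> R) : Prop :=
  exists ur ui : forall t : R, ClM R L t -> R, rs_unit R L mu Rg Delta ur ui.

From HB Require Import structures.
From mathcomp Require Import all_boot all_order all_algebra.
From mathcomp Require Import all_classical all_reals all_analysis measurable_realfun.
From mathcomp Require Import ring lra.
Import Order.TTheory GRing.Theory Num.Theory.
Import numFieldNormedType.Exports.
Local Open Scope classical_set_scope.
Local Open Scope ring_scope.

(* The unit is u_t = mu_t(Z = empty)^(-1/2) 1_(Z = empty).  Since the
   concatenation of two closed sets is empty iff both are, the density Delta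
   at the empty set relates the probabilities p_t = mu_t(Z = empty) by
   p_s p_t = Delta(s, t, empty) p_(s+t), which is exactly the multiplicativity
   of u.  The only real point is that u is not zero, i.e. p_e > 0 for some e:
   otherwise, by the factorization, every mu_t-random set would a.s. meet
   [0, e] x L for every e > 0, hence (being closed, and L being compact) would
   a.s. meet {0} x L, contradicting (ii).  Borel measurability of u follows
   from (iv a) by a Dynkin argument. *)

Lemma sqrtrV_mul (R : rcfType) (p : R) : 0 <= p -> Num.sqrt p^-1 * p = Num.sqrt p.
Proof.
move=> p_ge0; have [->|p_neq0] := eqVneq p 0; first by rewrite mulr0 sqrtr0.
have p_gt0 : 0 < p by rewrite lt_neqAle eq_sym p_neq0.
rewrite sqrtrV // -{2}(sqr_sqrtr p_ge0) expr2 mulrA mulVf ?mul1r //.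
by rewrite gt_eqF // sqrtr_gt0.
Qed.

Lemma sqrtrV_factor (R : rcfType) (p q d r : R) :
  0 <= p -> 0 <= q -> 0 < d -> 0 < r -> p * q = d * r ->
  Num.sqrt r^-1 = Num.sqrt d * (Num.sqrt p^-1 * Num.sqrt q^-1).
Proof.
move=> p_ge0 q_ge0 d_gt0 r_gt0 pq_dr.
have pq_gt0 : 0 < p * q by rewrite pq_dr mulr_gt0.
rewrite -sqrtrM ?invr_ge0 // -invfM -sqrtrM ?ltW //; congr Num.sqrt.
by rewrite pq_dr invfM mulrA mulfV ?mul1r // gt_eqF.
Qed.

Lemma measurable_pos_quadrant d (T : measurableType d) (R : realType) :
  measurable [set x : (R * R) * T | 0 < x.1.1 /\ 0 < x.1.2].
Proof.
have -> : [set x : (R * R) * T | 0 < x.1.1 /\ 0 < x.1.2] =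
    ([set` `]0, +oo[] `*` [set` `]0, +oo[]) `*` setT.
  apply/seteqP; split => -[[a b] Z] /=; rewrite !in_itv /= !andbT; first by move=> [-> ->].
  by move=> [[-> ->] _].
by apply: measurableX => //; exact: measurableX.
Qed.

Section FellSets.
Variables (R : realType) (L : topologicalType).
Implicit Types (s t : R).

Definition dilate t (p : R * L) := (p.1 * t, p.2).
Definition shift t (p : R * L) := (p.1 + t, p.2).

Definition empty_event t : set (ClM R L t) := [set Z | proj1_sig Z = set0].
Definition emptyCl t : ClM R L t := mkCl R L t set0.

Lemma mkClE t (X : set (R * L)) :
  closed X -> X `<=` band R L t -> proj1_sig (mkCl R L t X) = X.
Proof. by move=> cX bX; rewrite /mkCl; case: pselect => // -[]. Qed.

Lemma mkCl_set0 t : proj1_sig (mkCl R L t set0) = set0.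
Proof. by rewrite /mkCl; case: pselect. Qed.

Lemma continuous_fst_map (g : R -> R) :
  continuous g -> continuous (fun p : R * L => (g p.1, p.2)).
Proof.
move=> gc [x l].
apply: (@cvg_pair _ _ _ _ (nbhs (g x)) (nbhs l)) => /=.
  exact: (cvg_comp _ _ (@cvg_fst _ _ (nbhs x) (nbhs l) _) (gc x)).
exact: (@cvg_snd _ _ (nbhs x) (nbhs l) _).
Qed.

Lemma dilate_continuous t : continuous (dilate t).
Proof. exact: (@continuous_fst_map (fun x => x * t) (@mulrr_continuous _ t)). Qed.

Lemma shift_continuous t : continuous (shift t).
Proof.
apply: (@continuous_fst_map (fun x => x + t)) => x.
by apply: cvgD; [exact: cvg_id | exact: cvg_cst].
Qed.

Lemma strip_closed (a b : R) : closed [set p : R * L | a <= p.1 <= b].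
Proof.
have -> : [set p : R * L | a <= p.1 <= b] = fst @^-1` ([set x | a <= x] `&` [set x | x <= b]).
  by apply/seteqP; split => -[x l] /= => /andP.
apply: preimage_closed; last by apply: closedI; [exact: closed_ge | exact: closed_le].
by move=> [x l] _; exact: (@cvg_fst _ _ (nbhs x) (nbhs l) _).
Qed.

Lemma band_closed t : closed (band R L t).
Proof. exact: strip_closed. Qed.

Lemma band_compact t : compact [set: L] -> compact (band R L t).
Proof.
have -> : band R L t = [set` `[0, t]] `*` [set: L].
  by apply/seteqP; split => -[x l] /=; rewrite /band /= in_itv //= => -[].
by move=> cL; apply: compact_setX => //; exact: segment_compact.
Qed.

Lemma band_le s t : 0 <= s -> s <= t -> band R L s `<=` band R L t.
Proof. by move=> s0 st [x l] /andP[x0 xs]; apply/andP; split => //; lra. Qed.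

Lemma fell_subbase_open t (U : set (Cl R L t)) :
  fell_subbase R L t U -> fell_open R L t U.
Proof. by move=> h Z UZ; exists 1%N, (fun _ => U); split => // Y; apply; exact: ord0. Qed.

Lemma measurable_miss t (K : set (R * L)) :
  compact K -> K `<=` band R L t ->
  measurable [set Z : ClM R L t | proj1_sig Z `&` K = set0].
Proof.
by move=> cK bK; apply: sub_gen_smallest; apply: fell_subbase_open; left; exists K.
Qed.

Lemma measurable_hit t (G : set (R * L)) :
  open G -> measurable [set Z : ClM R L t | proj1_sig Z `&` G !=set0].
Proof.
by move=> oG; apply: sub_gen_smallest; apply: fell_subbase_open; right; exists G.
Qed.

Lemma measurable_empty_event t : measurable (empty_event t).
Proof.
have -> : empty_event t = ~` [set Z : ClM R L t | proj1_sig Z `&` setT !=set0].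
  apply/seteqP; split => Z; rewrite /empty_event /= setIT; first by move=> -> [].
  by move=> h; apply/eqP; apply: contra_notT h => h; exact/set0P.
by apply: measurableC; apply: measurable_hit; exact: openT.
Qed.

Lemma scaleE t (Z : ClM R L t) :
  0 < t -> proj1_sig (scale R L t Z) = dilate t @^-1` proj1_sig Z.
Proof.
move=> t0; apply: mkClE.
  by apply: preimage_closed; [move=> p _; exact: dilate_continuous | case: (proj2_sig Z)].
move=> [x l] /(proj2 (proj2_sig Z)) /andP[x0 xt].
by apply/andP; split; rewrite -(ler_pM2r t0) ?mul0r ?mul1r.
Qed.

Lemma preimage_scale_miss t (K : set (R * L)) : 0 < t ->
  scale R L t @^-1` [set Z : ClM R L 1 | proj1_sig Z `&` K = set0] =
  [set Z : ClM R L t | proj1_sig Z `&` (dilate t @` K) = set0].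
Proof.
move=> t0; apply/seteqP; split => Z /=; rewrite scaleE // => Z0.
  apply/seteqP; split => // q [Zq [p Kp pq]]; rewrite -pq in Zq.
  have : (dilate t @^-1` proj1_sig Z `&` K) p := conj Zq Kp.
  by rewrite Z0.
apply/seteqP; split => // p [Zp Kp].
have : (proj1_sig Z `&` (dilate t @` K)) (dilate t p) by split => //; exists p.
by rewrite Z0.
Qed.

Lemma preimage_scale_hit t (G : set (R * L)) : 0 < t ->
  scale R L t @^-1` [set Z : ClM R L 1 | proj1_sig Z `&` G !=set0] =
  [set Z : ClM R L t | proj1_sig Z `&` (dilate t^-1 @^-1` G) !=set0].
Proof.
move=> t0; apply/seteqP; split => Z /=; rewrite scaleE //.
  move=> [p [Zp Gp]]; exists (dilate t p); split => //=.
  by rewrite /dilate /= mulfK ?gt_eqF //; case: p Zp Gp.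
move=> [q [Zq Gq]]; exists (dilate t^-1 q); split => //=.
by rewrite /dilate /= divfK ?gt_eqF //; case: q Zq Gq.
Qed.

Lemma scale_subbase t (U : set (Cl R L 1)) :
  0 < t -> fell_subbase R L 1 U -> fell_subbase R L t (scale R L t @^-1` U).
Proof.
move=> t0 [[K [cK bK ->]]|[G [oG ->]]].
  left; exists (dilate t @` K); split; last exact: preimage_scale_miss.
    by apply: continuous_compact => //; apply: continuous_subspaceT; exact: dilate_continuous.
  move=> _ [[x l] /bK + <-]; rewrite /band /dilate /= => /andP[x0 x1].
  by apply/andP; split; [exact: mulr_ge0 x0 (ltW t0) | rewrite -[leRHS]mul1r ler_pM2r].
right; exists (dilate t^-1 @^-1` G); split; last exact: preimage_scale_hit.
by apply: open_comp => // q _; exact: dilate_continuous.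
Qed.

Lemma scale_open t (U : set (Cl R L 1)) :
  0 < t -> fell_open R L 1 U -> fell_open R L t (scale R L t @^-1` U).
Proof.
move=> t0 oU Z UZ; have [n [f [fs fZ fU]]] := oU _ UZ.
exists n, (fun i => scale R L t @^-1` f i); split => //.
- by move=> i; exact: scale_subbase.
- by move=> Y fY; exact: fU.
Qed.

Lemma measurable_scale t : 0 < t -> measurable_fun setT (scale R L t).
Proof.
move=> t0; apply: (@measurability _ _ (ClM R L t) (ClM R L 1) setT (scale R L t)
  (fell_open R L 1)) => //.
by move=> _ [U oU <-]; rewrite setTI; apply: sub_gen_smallest; exact: scale_open.
Qed.

Lemma measurable_scale_preimage t (A : set (ClM R L 1)) :
  0 < t -> measurable A -> measurable (scale R L t @^-1` A).
Proof. by move=> t0 mA; rewrite -(setTI (_ @^-1` _)); exact: measurable_scale. Qed.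

Lemma scale_empty t (Z : ClM R L t) : empty_event t Z -> scale R L t Z = emptyCl 1.
Proof.
by move=> Z0; congr mkCl; apply/seteqP; split => p //=; rewrite Z0.
Qed.

Lemma preimage_scale_empty t : 0 < t -> scale R L t @^-1` empty_event 1 = empty_event t.
Proof.
move=> t0; apply/seteqP; split => Z; last by move/scale_empty => /= ->; exact: mkCl_set0.
rewrite /empty_event /= scaleE // => Z0; apply/seteqP; split => // q Zq.
have : (dilate t @^-1` proj1_sig Z) (dilate t^-1 q).
  by rewrite /preimage /dilate /= divfK ?gt_eqF //; case: q Zq.
by rewrite Z0.
Qed.

Lemma oplusE s t (Z1 : ClM R L s) (Z2 : ClM R L t) : 0 <= s -> 0 <= t ->
  proj1_sig (oplus R L s t (Z1, Z2)) = proj1_sig Z1 `|` shift (- s) @^-1` proj1_sig Z2.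
Proof.
move=> s0 t0; apply: mkClE.
  apply: closedU; first by case: (proj2_sig Z1).
  by apply: preimage_closed; [move=> p _; exact: shift_continuous | case: (proj2_sig Z2)].
move=> [x l] [/(proj2 (proj2_sig Z1))|/(proj2 (proj2_sig Z2))];
  rewrite /band /= => /andP[x0 x1]; apply/andP; split; lra.
Qed.

Lemma preimage_oplus_empty s t : 0 <= s -> 0 <= t ->
  oplus R L s t @^-1` empty_event (s + t) = empty_event s `*` empty_event t.
Proof.
move=> s0 t0; apply/seteqP; split => -[Z1 Z2]; rewrite /empty_event /= oplusE //.
  move/seteqP => [Z0 _]; split; apply/seteqP; split => // p Zp.
    by apply: Z0; left.
  by apply: (Z0 (shift s p)); right; rewrite /preimage /shift /= addrK; case: p Zp.
by move=> [-> ->]; apply/seteqP; split => // p [].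
Qed.

Lemma preimage_oplus_miss_band s t : 0 < s -> 0 < t ->
  oplus R L s t @^-1` [set Z : ClM R L (s + t) | proj1_sig Z `&` band R L s = set0] =
  empty_event s `*` [set Z : ClM R L t | proj1_sig Z `&` band R L 0 = set0].
Proof.
move=> s0 t0; apply/seteqP; split => -[Z1 Z2]; rewrite /empty_event /= oplusE ?ltW //.
  move/seteqP => [Z0 _]; split; apply/seteqP; split => // p.
    by move=> Zp; apply: Z0; split; [left | exact: (proj2 (proj2_sig Z1))].
  move: p => [x l] [Zp /andP /= [x0 x1]]; apply: (Z0 (x + s, l)); split.
    by right; rewrite /preimage /shift /= addrK.
  by apply/andP; split => /=; lra.
move=> [Z10 Z20]; apply/seteqP; split => // -[x l] [[Zp|Zp]].
  by rewrite Z10 in Zp.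
rewrite /preimage /shift /= in Zp.
move=> /andP /= [x0 xs]; have /andP /= [y0 yt] := proj2 (proj2_sig Z2) _ Zp.
have : (proj1_sig Z2 `&` band R L 0) (x + - s, l) by split => //; apply/andP; split => /=; lra.
by rewrite Z20.
Qed.

Lemma restrLE s t (Z : ClM R L (s + t)) :
  proj1_sig (restrL R L s t Z) = proj1_sig Z `&` band R L s.
Proof.
apply: mkClE; last by move=> p [].
by apply: closedI; [case: (proj2_sig Z) | exact: band_closed].
Qed.

Lemma restrRE s t (Z : ClM R L (s + t)) :
  proj1_sig (restrR R L s t Z) = shift s @^-1` (proj1_sig Z `&` [set q | s <= q.1 <= s + t]).
Proof.
apply: mkClE.
  apply: (@preimage_closed _ _ (shift s) (proj1_sig Z `&` [set q | s <= q.1 <= s + t])).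
    by move=> p _; exact: shift_continuous.
  by apply: closedI; [case: (proj2_sig Z) | exact: strip_closed].
by move=> [x l] [_] /andP /= [x0 x1]; apply/andP; split => /=; lra.
Qed.

Lemma empty_event_restr s t (Z : ClM R L (s + t)) :
  empty_event (s + t) Z <->
  empty_event s (restrL R L s t Z) /\ empty_event t (restrR R L s t Z).
Proof.
rewrite /empty_event /= restrLE restrRE; split => [->|[ZL ZR]].
  by split; apply/seteqP; split => // p [].
apply/seteqP; split => // -[x l] Zp.
have /andP /= [x0 xst] := proj2 (proj2_sig Z) _ Zp.
have [xs|xs] := leP x s.
  have : (proj1_sig Z `&` band R L s) (x, l) by split => //; apply/andP.
  by rewrite ZL.
have : (shift s @^-1` (proj1_sig Z `&` [set q | s <= q.1 <= s + t])) (x - s, l).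
  by rewrite /preimage /shift /= subrK; split => //; apply/andP; split => /=; lra.
by rewrite ZR.
Qed.

Lemma indic_empty_restr s t (Z : ClM R L (s + t)) :
  \1_(empty_event (s + t)) Z =
  \1_(empty_event s) (restrL R L s t Z) * \1_(empty_event t) (restrR R L s t Z) :> R.
Proof.
have [/[dup] EZ /empty_event_restr [ZL ZR]|nEZ] := pselect (empty_event (s + t) Z).
  by rewrite !indicE !mem_set // mulr1.
rewrite indicE memNset //.
have /not_andP [nZL|nZR] := contra_not (proj2 (empty_event_restr _ _ Z)) nEZ.
  by rewrite !indicE (memNset nZL) mul0r.
by rewrite !indicE (memNset nZR) mulr0.
Qed.

Lemma closed_disjoint_small_band (X : set (R * L)) :
  compact [set: L] -> closed X -> (forall l, ~ X (0, l)) ->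
  exists n : nat, X `&` band R L n.+1%:R^-1 = set0.
Proof.
move=> cL cX X0.
have oX : open (~` X) by rewrite openC.
have [N _ hN] : \forall n \near \oo, [set: L] `<=`
    (fun l => forall x : R, 0 <= x <= n.+1%:R^-1 -> ~ X (x, l)).
  apply: (proj1 (compact_near_coveringP _) cL) => l _.
  have : nbhs (0, l) (~` X) by rewrite openE in oX; exact: (oX _ (X0 l)).
  case=> -[N1 N2] /= [nN1 nN2] sub.
  have [e /= e0 be] := (proj1 (nbhs_ballP _ _)) nN1.
  exists (N2, [set n : nat | n.+1%:R^-1 < e]); first split => //=.
    exact: (near_infty_natSinv_lt (PosNum e0)).
  move=> [l' n] /= [N2l' ne] x /andP[x0 xn].
  apply: (sub (x, l')); split => //=; apply: be.
  by rewrite /ball /= sub0r normrN ger0_norm //; exact: le_lt_trans xn ne.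
exists N; apply/seteqP; split => // -[x l] [Xp /andP[x0 x1]].
by apply: (hN N (leqnn N) l I x) => //; apply/andP; split.
Qed.

End FellSets.

Section EmptyEventProbability.
Context {R : realType} {L : topologicalType}.
Variable mu : forall t : R, probability (ClM R L t) R.
Context {Delta : (R * R) * ClM R L 1 -> R}.
Hypothesis Delta_gt0 :
  forall x : (R * R) * ClM R L 1, 0 < x.1.1 -> 0 < x.1.2 -> 0 < Delta x.
Hypothesis measurable_Delta :
  measurable_fun [set x : (R * R) * ClM R L 1 | 0 < x.1.1 /\ 0 < x.1.2] Delta.
Hypothesis oplus_density : forall s t : R, 0 < s -> 0 < t ->
  forall A : set (ClM R L (s + t)), measurable A ->
    (pushforward (mu s \x mu t) (oplus R L s t) A =
     \int[mu (s + t)]_(Z in A) (Delta ((s, t), scale R L (s + t) Z))%:E)%E.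

Definition empty_prob t : R := fine (mu t (empty_event R L t)).

Lemma empty_probE t : mu t (empty_event R L t) = (empty_prob t)%:E.
Proof.
rewrite /empty_prob fineK // ge0_fin_numE ?measure_ge0 //.
exact: le_lt_trans (probability_le1 _ (measurable_empty_event R L t)) (ltry _).
Qed.

Lemma empty_prob_ge0 t : 0 <= empty_prob t.
Proof. by rewrite -lee_fin -empty_probE measure_ge0. Qed.

Lemma empty_prob_factor s t : 0 < s -> 0 < t ->
  empty_prob s * empty_prob t = Delta ((s, t), emptyCl R L 1) * empty_prob (s + t).
Proof.
move=> s0 t0; apply: EFin_inj; rewrite !EFinM -!empty_probE.
have := oplus_density _ _ s0 t0 _ (measurable_empty_event R L (s + t)).
rewrite /pushforward preimage_oplus_empty ?ltW //.
rewrite (product_measure1E _ _ (measurable_empty_event R L s) (measurable_empty_event R L t)).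
move=> ->; rewrite (eq_integral (fun _ => (Delta ((s, t), emptyCl R L 1))%:E)).
  by rewrite integral_cst //; exact: measurable_empty_event.
by move=> Z /set_mem /scale_empty ->.
Qed.

(* Positivity of the density already gives the absolute continuity in (i). *)
Lemma oplus_null s t (A : set (ClM R L (s + t))) : 0 < s -> 0 < t -> measurable A ->
  (pushforward (mu s \x mu t) (oplus R L s t) A = 0 -> mu (s + t) A = 0)%E.
Proof.
move=> s0 t0 mA; rewrite oplus_density // => int0.
set f := fun Z => (Delta ((s, t), scale R L (s + t) Z))%:E.
have mf : measurable_fun A f.
  apply/measurable_EFinP.
  apply: (@measurable_comp _ _ _ _ _ _ _ Delta A (fun Z => ((s, t), scale R L (s + t) Z))).
  - exact: measurable_pos_quadrant.
  - by move=> _ [Z _ <-].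
  - exact: measurable_Delta.
  - apply: (measurable_funS measurableT) => //.
    apply: measurable_fun_pair; first exact: measurable_cst.
    by apply: measurable_scale; exact: addr_gt0.
have : (\int[mu (s + t)]_(Z in A) `|f Z| = 0)%E.
  by rewrite -int0; apply: eq_integral => Z _; rewrite gee0_abs // lee_fin ltW // Delta_gt0.
move/(ae_eq_integral_abs _ mA mf) => [N [mN N0 AN]].
apply/eqP; rewrite -measure_le0 -N0; apply: le_measure; rewrite ?inE //.
by move=> Z AZ; apply: AN => /= /(_ AZ) /eqP; rewrite /f eqe gt_eqF // Delta_gt0.
Qed.

Lemma miss_band_null s T : compact [set: L] -> 0 < s -> s < T -> empty_prob s = 0 ->
  mu T [set Z : ClM R L T | proj1_sig Z `&` band R L s = set0] = 0%E.
Proof.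
move=> cL s0 sT ps0.
have [t t0 ->] : exists2 t, 0 < t & T = s + t.
  by exists (T - s); [rewrite subr_gt0 | rewrite addrC subrK].
pose C := [set Z : ClM R L t | proj1_sig Z `&` band R L 0 = set0].
have mC : measurable C.
  by apply: measurable_miss; [exact: band_compact | exact: band_le (lexx 0) (ltW t0)].
apply: oplus_null => //.
  apply: measurable_miss; [exact: band_compact | apply: band_le (ltW s0) _].
  by rewrite lerDl ltW.
rewrite /pushforward preimage_oplus_miss_band //.
rewrite (_ : (mu s \x mu t) (empty_event R L s `*` C) = mu s (empty_event R L s) * mu t C)%E.
  by rewrite empty_probE ps0 mul0e.
exact: product_measure1E (measurable_empty_event R L s) mC.
Qed.

Lemma exists_empty_prob_gt0 : compact [set: L] ->
  (forall t r : R, 0 < t -> 0 <= r <= t ->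
     mu t [set Z : ClM R L t | exists l : L, proj1_sig Z (r, l)] = 0%E) ->
  exists2 e : R, 0 < e & 0 < empty_prob e.
Proof.
move=> cL no_fixed_time; apply: contrapT => no_e.
have p0 e : 0 < e -> empty_prob e = 0.
  move=> e0; apply/eqP; rewrite eq_le empty_prob_ge0 andbT leNgt.
  by apply/negP => pe; apply: no_e; exists e.
(* Work at time 2, so that every band [0, 1/(n+1)] x L lies strictly inside. *)
have inv_le1 n : n.+1%:R^-1 <= 1 :> R by rewrite invf_le1 ?ltr0Sn // ler1n.
pose M n := [set Z : ClM R L 2 | proj1_sig Z `&` band R L n.+1%:R^-1 = set0].
have mM n : measurable (M n).
  apply: measurable_miss; [exact: band_compact | apply: band_le].
    by rewrite invr_ge0.
  by apply: le_trans (inv_le1 n) _; rewrite ler1n.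
have M0 n : mu 2 (M n) = 0%E.
  have s_gt0 : 0 < n.+1%:R^-1 :> R by rewrite invr_gt0 ltr0Sn.
  apply: (miss_band_null _ _ cL s_gt0 _ (p0 _ s_gt0)).
  by apply: le_lt_trans (inv_le1 n) _; rewrite ltr1n.
pose hits0 := [set Z : ClM R L 2 | exists l, proj1_sig Z (0, l)].
have miss0E : ~` hits0 = [set Z : ClM R L 2 | proj1_sig Z `&` band R L 0 = set0].
  apply/seteqP; split => Z /=.
    move=> nH; apply/seteqP; split => // -[x l] [Zp /andP /= [x0 x1]].
    by apply: nH; exists l; have <- : x = 0 by apply/le_anti; rewrite x0 x1.
  move=> Z0 [l Zl].
  have : (proj1_sig Z `&` band R L 0) (0, l) by split => //; rewrite /band /= lexx.
  by rewrite Z0.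
have m_miss0 : measurable (~` hits0).
  by rewrite miss0E; apply: measurable_miss; [exact: band_compact | apply: band_le].
have miss0_1 : mu 2 (~` hits0) = 1%E.
  rewrite probability_setC; last by rewrite -[hits0]setCK; exact: measurableC.
  by rewrite no_fixed_time ?sube0 // ?lexx ?ltr0n ?ler0n.
have cover : ~` hits0 `<=` \bigcup_n M n.
  move=> Z nH; have [n Zn] := closed_disjoint_small_band _ _ _ cL (proj1 (proj2_sig Z))
    (fun l Zl => nH (ex_intro _ l Zl)).
  by exists n.
have : (1 <= 0 :> \bar R)%E.
  rewrite -[leLHS]miss0_1; apply: le_trans (measure_sigma_subadditive _ mM m_miss0 cover) _.
  by rewrite eseries0 // => n _ _; exact: M0.
by rewrite lee_fin ler10.
Qed.

Lemma measurable_fun_scale_preimage (Rg : set (set (ClM R L 1))) :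
  setring Rg -> <<s Rg >> = measurable ->
  (forall A, Rg A -> measurable_fun [set t : R | 0 < t]
     (fun t => pushforward (mu t) (scale R L t) A)) ->
  forall A, measurable A ->
  measurable_fun [set t : R | 0 < t] (fun t => mu t (scale R L t @^-1` A)).
Proof.
move=> Rg_ring Rg_gen Rg_meas A mA; have [_ _ RgD] := Rg_ring.
apply: (@dynkin_induction _ _ Rg (fun A => measurable_fun [set t : R | 0 < t]
  (fun t => mu t (scale R L t @^-1` A)))); last by rewrite Rg_gen.
- by rewrite Rg_gen.
- by move=> X Y RgX RgY; rewrite -setDD; apply: (RgD) => //; exact: RgD.
- rewrite (_ : (fun t => _) = cst 1%E); first exact: measurable_cst.
  by apply/funext => t; rewrite preimage_setT probability_setT.
- exact: Rg_meas.
- move=> S mS PS; apply: (eq_measurable_fun (fun t => 1 - mu t (scale R L t @^-1` S))%E).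
    move=> t /set_mem /= t0.
    by rewrite -preimage_setC probability_setC //; exact: measurable_scale_preimage.
  by apply: emeasurable_funB => //; exact: measurable_cst.
- move=> F mF tF PF.
  apply: (@emeasurable_fun_cvg _ _ _ _
    (fun n t => \sum_(0 <= i < n) mu t (scale R L t @^-1` F i))%E).
    by move=> n; apply: emeasurable_sum => i; exact: PF.
  move=> t /= t0; rewrite preimage_bigcup.
  apply: (@measure_sigma_additive _ _ _ (mu t) (fun i => scale R L t @^-1` F i)).
    by move=> i; exact: measurable_scale_preimage.
  by move=> i j _ _ [Z [Zi Zj]]; apply: tF => //; exists (scale R L t Z).
Qed.

(* If p_t = 0 then p_t^-1 = 0 and u_t vanishes; this does no harm, since
   {Z = empty} is then mu_t-null. *)
Definition empty_unit t (Z : ClM R L t) : R :=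
  Num.sqrt (empty_prob t)^-1 * \1_(empty_event R L t) Z.

Lemma measurable_empty_unit t : measurable_fun setT (empty_unit t).
Proof.
apply: measurable_funM; first exact: measurable_cst.
by apply: measurable_indic; exact: measurable_empty_event.
Qed.

Lemma integral_empty_indic t k (B : set (ClM R L t)) : 0 <= k -> measurable B ->
  (\int[mu t]_(Z in B) (k * \1_(empty_event R L t) Z)%:E =
   k%:E * mu t (empty_event R L t `&` B))%E.
Proof.
move=> k_ge0 mB; rewrite (@integralZl_indic _ _ _ (mu t) B mB (fun=> empty_event R L t)).
- by rewrite integral_indic //; exact: measurable_empty_event.
- by rewrite ltNge k_ge0.
- exact: measurable_empty_event.
Qed.

Lemma integral_empty_unit t (B : set (ClM R L t)) : measurable B ->
  (\int[mu t]_(Z in B) (empty_unit t Z)%:E =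
   (Num.sqrt (empty_prob t)^-1)%:E * mu t (empty_event R L t `&` B))%E.
Proof. exact: integral_empty_indic (sqrtr_ge0 _). Qed.

Lemma empty_unit_sq_integral_le1 t : (\int[mu t]_Z ((empty_unit t Z) ^+ 2)%:E <= 1)%E.
Proof.
have p_ge0 := empty_prob_ge0 t.
rewrite (eq_integral (fun Z => ((empty_prob t)^-1 * \1_(empty_event R L t) Z)%:E)); last first.
  move=> Z _; rewrite /empty_unit exprMn sqr_sqrtr ?invr_ge0 // indicE.
  by case: (Z \in _); rewrite ?expr1n ?expr2 ?mulr0.
rewrite integral_empty_indic ?invr_ge0 // setIT empty_probE -EFinM lee_fin.
by have [->|p_neq0] := eqVneq (empty_prob t) 0; rewrite ?invr0 ?mul0r ?ler01 // mulVf.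
Qed.

Lemma empty_unit_ae_neq0 t : 0 < empty_prob t -> ~ {ae mu t, forall Z, empty_unit t Z = 0}.
Proof.
move=> p_gt0 [N [mN N0 sub]].
have : (mu t (empty_event R L t) <= mu t N)%E.
  apply: le_measure; rewrite ?inE //; first exact: measurable_empty_event.
  move=> Z EZ; apply: sub => /=; rewrite /empty_unit indicE mem_set // mulr1.
  by apply/eqP; rewrite gt_eqF // sqrtr_gt0 invr_gt0.
by rewrite N0 empty_probE lee_fin leNgt p_gt0.
Qed.

Lemma measurable_empty_unit_section (A : set (ClM R L 1)) : measurable A ->
  measurable_fun [set t : R | 0 < t] (fun t => mu t (scale R L t @^-1` empty_event R L 1)) ->
  measurable_fun [set t : R | 0 < t]
    (fun t => \int[mu t]_(Z in scale R L t @^-1` A) (empty_unit t Z)%:E)%E.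
Proof.
move=> mA mE.
have [A0|nA0] := pselect (A (emptyCl R L 1)).
  apply: (eq_measurable_fun
    (fun t => (Num.sqrt (fine (mu t (scale R L t @^-1` empty_event R L 1))))%:E)).
    move=> t /set_mem /= t0; rewrite integral_empty_unit; last exact: measurable_scale_preimage.
    rewrite setIidl; last by move=> Z /scale_empty /= ->.
    rewrite preimage_scale_empty // -/(empty_prob t) empty_probE -EFinM.
    by rewrite sqrtrV_mul // empty_prob_ge0.
  apply/measurable_EFinP; apply: measurableT_comp; last exact: measurableT_comp.
  exact: continuous_measurable_fun (@sqrt_continuous R).
apply: (eq_measurable_fun (cst 0%E)); last exact: measurable_cst.
move=> t /set_mem /= t0; rewrite integral_empty_unit; last exact: measurable_scale_preimage.
rewrite (_ : _ `&` _ = set0) ?measure0 ?mule0 //.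
by apply/seteqP; split => // Z [/scale_empty EZ]; rewrite /= EZ.
Qed.

Lemma empty_unit_mulE s t (Z : ClM R L (s + t)) : 0 < s -> 0 < t ->
  (empty_event R L (s + t) Z -> 0 < empty_prob (s + t)) ->
  empty_unit (s + t) Z = Num.sqrt (Delta ((s, t), scale R L (s + t) Z)) *
    (empty_unit s (restrL R L s t Z) * empty_unit t (restrR R L s t Z)).
Proof.
move=> s0 t0 p_gt0; rewrite /empty_unit mulrACA -indic_empty_restr mulrA.
have [EZ|nEZ] := pselect (empty_event R L (s + t) Z); last first.
  by rewrite indicE memNset // !mulr0.
rewrite scale_empty //; congr (_ * _).
apply: sqrtrV_factor (empty_prob_ge0 s) (empty_prob_ge0 t) _ (p_gt0 EZ) _.
  exact: Delta_gt0 ((s, t), _) s0 t0.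
exact: empty_prob_factor.
Qed.

Lemma empty_unit_mul s t : 0 < s -> 0 < t ->
  {ae mu (s + t), forall Z, empty_unit (s + t) Z =
    Num.sqrt (Delta ((s, t), scale R L (s + t) Z)) *
    (empty_unit s (restrL R L s t Z) * empty_unit t (restrR R L s t Z))}.
Proof.
move=> s0 t0; have [p0|p_neq0] := eqVneq (empty_prob (s + t)) 0.
  exists (empty_event R L (s + t)); split; first exact: measurable_empty_event.
    by rewrite empty_probE p0.
  move=> Z /= nmul; apply: contrapT => nEZ; apply: nmul.
  by apply: empty_unit_mulE => // /nEZ.
apply: aeW => Z; apply: empty_unit_mulE => // _.
by rewrite lt_neqAle eq_sym p_neq0 empty_prob_ge0.
Qed.

End EmptyEventProbability.

Theorem corollary3p3 (R : realType) (L : topologicalType)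
  (hL : hausdorff_space L) (scL : @second_countable L) (cL : compact [set: L])
  (mu : forall t : R, probability (ClM R L t) R)
  (Rg : set (set (ClM R L 1)))
  (Delta : (R * R) * ClM R L 1 -> R) :
  measurable_factorizing_family R L mu Rg Delta ->
  spatial R L mu Rg Delta.
Proof.
move=> [_ no_fixed_time _ [_ Rg_ring Rg_sub Rg_gen Rg_meas] [Delta_meas Delta_gt0 density]].
have [e e_gt0 pe_gt0] := exists_empty_prob_gt0 mu Delta_gt0 Delta_meas density cL no_fixed_time.
have mE := measurable_fun_scale_preimage mu _ Rg_ring Rg_gen Rg_meas _
  (measurable_empty_event R L 1).
exists (empty_unit mu), (fun _ _ => 0); split.
- move=> t _; split; [exact: measurable_empty_unit | exact: measurable_cst |].
  under eq_integral do rewrite (expr2 0) mulr0 addr0.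
  exact: le_lt_trans (empty_unit_sq_integral_le1 mu t) (ltry _).
- exists e; split => // ae0; apply: (empty_unit_ae_neq0 mu e pe_gt0).
  by apply: filterS _ ae0 => Z [].
- move=> A RgA; split; first exact: measurable_empty_unit_section mu _ (Rg_sub _ RgA) mE.
  rewrite (_ : (fun t => _) = cst 0%E); first exact: measurable_cst.
  by apply/funext => t; exact: integral0.
- move=> s t s_gt0 t_gt0.
  apply: filterS _ (empty_unit_mul mu Delta_gt0 density _ _ s_gt0 t_gt0) => Z /= ->.
  by split; ring.
Qed.
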